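(* Let $\alpha_1,\dots,\alpha_4$ be constants, $H=H(t,t^-,q,q^-,p,p^-)$ smooth, and $X=\xi\partial_t+\eta\partial_q+\nu\partial_p$ (coefficients functions of $(t,q,p)$) such that $\Omega=0$, so that $D(C)=(S_+-1)P$ holds on the solutions of the local extremal equation $F_H=\xi\frac{\delta\tilde H}{\delta t}+\eta\frac{\delta\tilde H}{\delta q}+\nu\frac{\delta\tilde H}{\delta p}=0$. If in addition the condition $(S_+-1)P=0$ is imposed, then $I=C$ is a differential first integral: $D(C)=0$ on the solutions of $F_H=0$ satisfying $(S_+-1)P=0$.
   Context: Constant delay $\tau>0$; $t^\pm=t\pm\tau$, $f^\pm=f(t\pm\tau)$; scalar $q,p$. $S_\pm$ are the forward/backward shift operators on expressions; $\xi^\pm=S_\pm(\xi)$ etc.; $H^+=S_+(H)$. $D$ is the total derivative acting on variables at $t^-,t,t^+$. $\tilde H=p^{-}(\alpha_{1}\dot{q}+\alpha_{2}\dot{q}^{-})+p(\alpha_{3}\dot{q}+\alpha_{4}\dot{q}^{-})-H$; $\frac{\delta\tilde H}{\delta p}=\alpha_1\dot q^++(\alpha_2+\alpha_3)\dot q+\alpha_4\dot q^--\partial_p(H+H^+)$, $\frac{\delta\tilde H}{\delta q}=-\big(\alpha_4\dot p^++(\alpha_2+\alpha_3)\dot p+\alpha_1\dot p^-+\partial_q(H+H^+)\big)$, $\frac{\delta\tilde H}{\delta t}=D[\alpha_2(p\dot q-p^-\dot q^-)+\alpha_4(p^+\dot q-p\dot q^-)]+D(H)-\partial_t(H+H^+)$.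 $\Omega=\nu^{-}(\alpha_{1}\dot{q}+\alpha_{2}\dot{q}^{-})+p^{-}(\alpha_{1}D(\eta)+\alpha_{2}D(\eta^{-}))+\nu(\alpha_{3}\dot{q}+\alpha_{4}\dot{q}^{-})+p(\alpha_{3}D(\eta)+\alpha_{4}D(\eta^{-}))+(\alpha_{2}p^{-}+\alpha_{4}p)\dot{q}^{-}D(\xi-\xi^{-})-\xi H_t-\eta H_q-\nu H_p-\xi^{-}H_{t^-}-\eta^{-}H_{q^-}-\nu^{-}H_{p^-}-HD(\xi)$. $C=\eta(\alpha_{4}p^{+}+(\alpha_{2}+\alpha_{3})p+\alpha_{1}p^{-})-\xi\big(\alpha_{2}(p\dot{q}-p^{-}\dot{q}^{-})+\alpha_{4}(p^{+}\dot{q}-p\dot{q}^{-})+H\big)$, $P=(\alpha_{2}p^{-}+\alpha_{4}p)D(\eta^{-})+\nu^{-}(\alpha_{1}\dot{q}+\alpha_{2}\dot{q}^{-})-(\alpha_{2}p^{-}+\alpha_{4}p)\dot{q}^{-}D(\xi^{-})-\xi^{-}H_{t^-}-\eta^{-}H_{q^-}-\nu^{-}H_{p^-}$. Equations are considered with $t^+-t=t-t^-=\tau$. *)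

From HB Require Import structures.
From mathcomp Require Import all_boot all_order all_algebra.
From mathcomp Require Import all_classical all_reals all_analysis.
Set Implicit Arguments. Unset Strict Implicit. Unset Printing Implicit Defensive.
Import Order.TTheory GRing.Theory Num.Theory.
Import numFieldNormedType.Exports.
Local Open Scope ring_scope.

Definition smooth1 {R : realType} (f : R -> R) : Prop :=
  forall (n : nat) (x : R), derivable (derive1n n f) x 1.

Definition partial {R : realType} {m : nat} (i : 'I_m) (f : 'rV[R]_m -> R)
  : 'rV[R]_m -> R := fun x => derive f x (delta_mx 0 i).

Fixpoint Ck {R : realType} {m : nat} (k : nat) (f : 'rV[R]_m -> R) : Prop :=
  match k with
  | 0 => continuous f
  | k'.+1 => (forall x, differentiable f x) /\ (forall i : 'I_m, Ck k' (partial i f))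
  end.

Definition smooth {R : realType} {m : nat} (f : 'rV[R]_m -> R) : Prop :=
  forall k, Ck k f.

Definition vec3 {R : realType} (t q p : R) : 'rV[R]_3 :=
  \row_(i < 3) [:: t; q; p]`_i.
Definition vec6 {R : realType} (t tm q qm p pm : R) : 'rV[R]_6 :=
  \row_(i < 6) [:: t; tm; q; qm; p; pm]`_i.

Definition D {R : realType} (f : R -> R) : R -> R := derive1 f.
Definition Sm {R : realType} (tau : R) (f : R -> R) : R -> R := fun t => f (t - tau).
Definition Sp {R : realType} (tau : R) (f : R -> R) : R -> R := fun t => f (t + tau).

Definition along {R : realType} (xi : 'rV[R]_3 -> R) (q p : R -> R) : R -> R :=
  fun t => xi (vec3 t (q t) (p t)).

Definition pt6 {R : realType} (tau : R) (q p : R -> R) (t : R) : 'rV[R]_6 :=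
  vec6 t (t - tau) (q t) (q (t - tau)) (p t) (p (t - tau)).

Definition Hal {R : realType} (tau : R) (H : 'rV[R]_6 -> R) (q p : R -> R) : R -> R :=
  fun t => H (pt6 tau q p t).

(* partial derivative of H in slot i, along the trajectory.
   slots: 0 = t, 1 = t^-, 2 = q, 3 = q^-, 4 = p, 5 = p^- *)
Definition Hd {R : realType} (tau : R) (H : 'rV[R]_6 -> R) (q p : R -> R) (i : nat)
  : R -> R := fun t => partial (@inord 5 i) H (pt6 tau q p t).

Definition dHp {R : realType} (tau a1 a2 a3 a4 : R) (H : 'rV[R]_6 -> R)
  (q p : R -> R) (t : R) : R :=
  a1 * D q (t + tau) + (a2 + a3) * D q t + a4 * D q (t - tau)
  - (Hd tau H q p 4 t + Hd tau H q p 5 (t + tau)).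

Definition dHq {R : realType} (tau a1 a2 a3 a4 : R) (H : 'rV[R]_6 -> R)
  (q p : R -> R) (t : R) : R :=
  - (a4 * D p (t + tau) + (a2 + a3) * D p t + a1 * D p (t - tau)
     + (Hd tau H q p 2 t + Hd tau H q p 3 (t + tau))).

Definition Gx {R : realType} (tau a2 a4 : R) (q p : R -> R) (t : R) : R :=
  a2 * (p t * D q t - p (t - tau) * D q (t - tau))
  + a4 * (p (t + tau) * D q t - p t * D q (t - tau)).

Definition dHt {R : realType} (tau a1 a2 a3 a4 : R) (H : 'rV[R]_6 -> R)
  (q p : R -> R) (t : R) : R :=
  D (Gx tau a2 a4 q p) t + D (Hal tau H q p) t
  - (Hd tau H q p 0 t + Hd tau H q p 1 (t + tau)).

Definition FH {R : realType} (tau a1 a2 a3 a4 : R) (H : 'rV[R]_6 -> R)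
  (xi eta nu : 'rV[R]_3 -> R) (q p : R -> R) (t : R) : R :=
  along xi q p t * dHt tau a1 a2 a3 a4 H q p t
  + along eta q p t * dHq tau a1 a2 a3 a4 H q p t
  + along nu q p t * dHp tau a1 a2 a3 a4 H q p t.

Definition Omega {R : realType} (tau a1 a2 a3 a4 : R) (H : 'rV[R]_6 -> R)
  (xi eta nu : 'rV[R]_3 -> R) (q p : R -> R) (t : R) : R :=
  let xs := along xi q p in
  let es := along eta q p in
  let ns := along nu q p in
  Sm tau ns t * (a1 * D q t + a2 * D q (t - tau))
  + p (t - tau) * (a1 * D es t + a2 * D (Sm tau es) t)
  + ns t * (a3 * D q t + a4 * D q (t - tau))
  + p t * (a3 * D es t + a4 * D (Sm tau es) t)
  + (a2 * p (t - tau) + a4 * p t) * D q (t - tau) * D (fun s => xs s - Sm tau xs s) t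
  - xs t * Hd tau H q p 0 t - es t * Hd tau H q p 2 t - ns t * Hd tau H q p 4 t
  - Sm tau xs t * Hd tau H q p 1 t - Sm tau es t * Hd tau H q p 3 t
  - Sm tau ns t * Hd tau H q p 5 t
  - Hal tau H q p t * D xs t.

Definition Cfi {R : realType} (tau a1 a2 a3 a4 : R) (H : 'rV[R]_6 -> R)
  (xi eta nu : 'rV[R]_3 -> R) (q p : R -> R) (t : R) : R :=
  along eta q p t * (a4 * p (t + tau) + (a2 + a3) * p t + a1 * p (t - tau))
  - along xi q p t * (Gx tau a2 a4 q p t + Hal tau H q p t).

Definition Pfi {R : realType} (tau a1 a2 a3 a4 : R) (H : 'rV[R]_6 -> R)
  (xi eta nu : 'rV[R]_3 -> R) (q p : R -> R) (t : R) : R :=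
  let xs := along xi q p in
  let es := along eta q p in
  let ns := along nu q p in
  (a2 * p (t - tau) + a4 * p t) * D (Sm tau es) t
  + Sm tau ns t * (a1 * D q t + a2 * D q (t - tau))
  - (a2 * p (t - tau) + a4 * p t) * D q (t - tau) * D (Sm tau xs) t
  - Sm tau xs t * Hd tau H q p 1 t - Sm tau es t * Hd tau H q p 3 t
  - Sm tau ns t * Hd tau H q p 5 t.

From HB Require Import structures.
From mathcomp Require Import all_boot all_order all_algebra.
From mathcomp Require Import all_classical all_reals all_analysis.
From mathcomp Require Import ring.
Import Order.TTheory GRing.Theory Num.Theory.
Import numFieldNormedType.Exports.
Local Open Scope ring_scope.

(* Differentiating C along an arbitrary curve (q, p) by the product rule and
   regrouping gives the identity  D C = Omega + (S_+ - 1) P - F_H,  valid for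
   every delay and without any equation on the curve; nu is never
   differentiated in it. *)

Section DerivativeRules.
Context {R : realType}.
Implicit Types (f g : R -> R) (c t : R).

Lemma derivable_shift {f c t} :
  derivable f (t + c) 1 -> derivable (fun s => f (s + c)) t 1.
Proof.
have E : (fun h : R => h^-1 *: (((fun s => f (s + c)) \o shift t) (h *: 1) - f (t + c)))
  = (fun h => h^-1 *: ((f \o shift (t + c)) (h *: 1) - f (t + c))).
  by apply: funext => h /=; rewrite addrA.
by rewrite /derivable E.
Qed.

Lemma D_shift f c t : D (fun s => f (s + c)) t = D f (t + c).
Proof.
have E : (fun h : R => h^-1 *: ((fun s => f (s + c)) (h + t) - f (t + c)))
  = (fun h => h^-1 *: (f (h + (t + c)) - f (t + c))).
  by apply: funext => h /=; rewrite addrA.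
by rewrite /D /derive1 E.
Qed.

Lemma D_add {f g t} : derivable f t 1 -> derivable g t 1 ->
  D (fun s => f s + g s) t = D f t + D g t.
Proof. by move=> df dg; rewrite /D !derive1E; apply: deriveD. Qed.

Lemma D_sub {f g t} : derivable f t 1 -> derivable g t 1 ->
  D (fun s => f s - g s) t = D f t - D g t.
Proof. by move=> df dg; rewrite /D !derive1E; apply: deriveB. Qed.

Lemma D_mul {f g t} : derivable f t 1 -> derivable g t 1 ->
  D (fun s => f s * g s) t = f t * D g t + g t * D f t.
Proof. by move=> df dg; rewrite /D !derive1E; apply: deriveM. Qed.

Lemma D_scale (a : R) {f t} : derivable f t 1 -> D (fun s => a * f s) t = a * D f t.
Proof. exact: derive1Ml. Qed.

Lemma derivable_add {f g t} : derivable f t 1 -> derivable g t 1 ->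
  derivable (fun s => f s + g s) t 1.
Proof. exact: derivableD. Qed.

Lemma derivable_sub {f g t} : derivable f t 1 -> derivable g t 1 ->
  derivable (fun s => f s - g s) t 1.
Proof. exact: derivableB. Qed.

Lemma derivable_mul {f g t} : derivable f t 1 -> derivable g t 1 ->
  derivable (fun s => f s * g s) t 1.
Proof. exact: derivableM. Qed.

Lemma derivable_scale (a : R) {f t} : derivable f t 1 -> derivable (fun s => a * f s) t 1.
Proof. by apply: derivable_mul; apply: derivable_cst. Qed.

Lemma smooth1_derivable {f} :
  smooth1 f -> (forall t, derivable f t 1) /\ (forall t, derivable (D f) t 1).
Proof. by move=> sf; split=> t; [exact: (sf 0%N t) | exact: (sf 1%N t)]. Qed.

End DerivativeRules.

Section SeveralVariables.
Context {R : realType} {m : nat}.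

Lemma smooth_differentiable {F : 'rV[R]_m -> R} :
  smooth F -> forall x, differentiable F x.
Proof. by move=> sF; case: (sF 1%N). Qed.

Lemma derivable_vector_comp (F : 'rV[R]_m -> R) (c : R -> 'rV[R]_m) t :
  (forall x, differentiable F x) ->
  (forall j, derivable (fun s => c s ord0 j) t 1) ->
  derivable (fun s => F (c s)) t 1.
Proof.
move=> dF dc; apply/derivable1_diffP.
apply: (differentiable_comp (f := c) (g := F)); last exact: dF.
by apply/derivable1_diffP; apply/derivable_mxP => i j; rewrite (ord1 i).
Qed.

End SeveralVariables.

Section AlongTrajectory.
Variables (R : realType) (tau : R) (q p : R -> R).
Implicit Types (f : R -> R) (c t : R).
Hypotheses (dq : forall t, derivable q t 1) (dp : forall t, derivable p t 1).

Lemma derivable_along (xi : 'rV[R]_3 -> R) t :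
  (forall x, differentiable xi x) -> derivable (along xi q p) t 1.
Proof.
move=> dxi; apply: (@derivable_vector_comp _ _ _ (fun s => vec3 s (q s) (p s))) => // j.
rewrite (_ : (fun s => _) = (fun s => [:: s; q s; p s]`_j)); last first.
  by apply: funext => s; rewrite mxE.
by case: j => [[|[|[|j]]] Hj] //=; apply: derivable_id.
Qed.

Lemma derivable_Hal (H : 'rV[R]_6 -> R) t :
  (forall x, differentiable H x) -> derivable (Hal tau H q p) t 1.
Proof.
move=> dH; apply: (@derivable_vector_comp _ _ _ (pt6 tau q p)) => // j.
rewrite (_ : (fun s => _) =
    (fun s => [:: s; s - tau; q s; q (s - tau); p s; p (s - tau)]`_j)); last first.
  by apply: funext => s; rewrite mxE.
by case: j => [[|[|[|[|[|[|j]]]]]] Hj] //=; exact: derivable_shift.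
Qed.

Lemma derivable_Gx (a2 a4 : R) t :
  (forall t, derivable (D q) t 1) -> derivable (Gx tau a2 a4 q p) t 1.
Proof.
move=> dDq; have dsh f c : (forall t, derivable f t 1) -> derivable (fun s => f (s + c)) t 1.
  by move=> df; apply: derivable_shift.
by apply: derivable_add; apply: derivable_scale; apply: derivable_sub;
  apply: derivable_mul; auto.
Qed.

End AlongTrajectory.

Section ConservationIdentity.
Context {R : realType} {tau a1 a2 a3 a4 : R} {H : 'rV[R]_6 -> R}.
Context {xi eta nu : 'rV[R]_3 -> R} {q p : R -> R}.
Hypotheses (dH : forall x, differentiable H x) (dxi : forall x, differentiable xi x).
Hypothesis (deta : forall x, differentiable eta x).
Hypotheses (dq : forall t, derivable q t 1) (dDq : forall t, derivable (D q) t 1).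
Hypothesis (dp : forall t, derivable p t 1).

Local Notation xs := (along xi q p).
Local Notation es := (along eta q p).

Lemma D_Cfi t :
  D (Cfi tau a1 a2 a3 a4 H xi eta nu q p) t =
  Omega tau a1 a2 a3 a4 H xi eta nu q p t
  + (Sp tau (Pfi tau a1 a2 a3 a4 H xi eta nu q p) t - Pfi tau a1 a2 a3 a4 H xi eta nu q p t)
  - FH tau a1 a2 a3 a4 H xi eta nu q p t.
Proof.
have dxs s : derivable xs s 1 by exact: derivable_along.
have des s : derivable es s 1 by exact: derivable_along.
have dG s : derivable (Gx tau a2 a4 q p) s 1 by exact: derivable_Gx.
have dHal s : derivable (Hal tau H q p) s 1 by exact: derivable_Hal.
have dps c s : derivable (fun s => p (s + c)) s 1 by exact: derivable_shift.
set A := fun s => a4 * p (s + tau) + (a2 + a3) * p s + a1 * p (s - tau).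
have dA1 := derivable_scale a4 (dps tau t).
have dA2 := derivable_scale (a2 + a3) (dp t).
have dA3 := derivable_scale a1 (dps (- tau) t).
have dA : derivable A t 1 := derivable_add (derivable_add dA1 dA2) dA3.
have DA : D A t = a4 * D p (t + tau) + (a2 + a3) * D p t + a1 * D p (t - tau).
  rewrite /A (D_add (derivable_add dA1 dA2) dA3) (D_add dA1 dA2).
  by rewrite (D_scale _ (dps tau t)) (D_scale _ (dp t)) (D_scale _ (dps (- tau) t)) !D_shift.
have dGH := derivable_add (dG t) (dHal t).
rewrite /Cfi -/A (D_sub (derivable_mul (des t) dA) (derivable_mul (dxs t) dGH)).
rewrite (D_mul (des t) dA) (D_mul (dxs t) dGH) (D_add (dG t) (dHal t)) DA.
rewrite /Omega /Pfi /Sp /Sm /FH /dHt /dHq /dHp /=.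
rewrite (D_sub (dxs t) (derivable_shift (dxs _))) !D_shift !addrK /A /Gx.
(* [ring] would compare these atoms up to conversion, unfolding [D] and [Hd]. *)
repeat match goal with
  | |- context [D ?f ?s] => generalize (D f s); intro
  | |- context [Hd ?tau ?H ?q ?p ?i ?s] => generalize (Hd tau H q p i s); intro
  end.
ring.
Qed.

End ConservationIdentity.

Theorem proposition3 (R : realType) (tau a1 a2 a3 a4 : R)
  (H : 'rV[R]_6 -> R) (xi eta nu : 'rV[R]_3 -> R) :
  0 < tau ->
  smooth H -> smooth xi -> smooth eta -> smooth nu ->
  (* Omega = 0 identically (for every smooth curve (q,p), at every t) *)
  (forall q p : R -> R, smooth1 q -> smooth1 p ->
     forall t, Omega tau a1 a2 a3 a4 H xi eta nu q p t = 0) ->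
  forall q p : R -> R, smooth1 q -> smooth1 p ->
  (* (q,p) solves the local extremal equation F_H = 0 *)
  (forall t, FH tau a1 a2 a3 a4 H xi eta nu q p t = 0) ->
  (* and satisfies the extra condition (S_+ - 1) P = 0 *)
  (forall t, Sp tau (Pfi tau a1 a2 a3 a4 H xi eta nu q p) t
             - Pfi tau a1 a2 a3 a4 H xi eta nu q p t = 0) ->
  (* then C is a first integral: D(C) = 0 *)
  forall t, D (Cfi tau a1 a2 a3 a4 H xi eta nu q p) t = 0.
Proof.
move=> _ sH sxi seta _ Omega0 q p sq sp FH0 P_periodic t.
have [dq dDq] := smooth1_derivable sq.
have [dp _] := smooth1_derivable sp.
rewrite (D_Cfi (smooth_differentiable sH) (smooth_differentiable sxi)
  (smooth_differentiable seta) dq dDq dp).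
by rewrite Omega0 // P_periodic FH0 addr0 subr0.
Qed.
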